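(* Let $w,w'\in[0,1]$ with $w+w'=1$. If a $gH$-differentiable IVF $\textbf{F}$ on a nonempty subset $\mathcal{X}$ of $\mathbb{R}^n$ has $gH$-Lipschitz gradient, then for some $L>0$, \[\lVert\mathcal{W}(\nabla\textbf{F}(x))-\mathcal{W}(\nabla\textbf{F}(y))\rVert\le L\lVert x-y\rVert\quad\text{for all }x,y\in\mathcal{X}.\]
   Context: $I(\mathbb{R})$: closed bounded intervals $\textbf{A}=[\underline{a},\overline{a}]$ with Moore arithmetic ($\oplus$ endpointwise; $\lambda\odot\textbf{A}=[\lambda\underline{a},\lambda\overline{a}]$ if $\lambda\ge0$, $[\lambda\overline{a},\lambda\underline{a}]$ if $\lambda<0$); $\textbf{A}\ominus_{gH}\textbf{B}=[\min\{\underline{a}-\underline{b},\overline{a}-\overline{b}\},\max\{\underline{a}-\underline{b},\overline{a}-\overline{b}\}]$ (componentwise on $I(\mathbb{R})^n$). Norms: $\lVert\textbf{A}\rVert_{I(\mathbb{R})}=\max\{|\underline{a}|,|\overline{a}|\}$, $\lVert(\textbf{A}_i)\rVert_{I(\mathbb{R})^n}=\sum_i\lVert\textbf{A}_i\rVert_{I(\mathbb{R})}$, $\lVert\cdot\rVert$ Euclidean on $\mathbb{R}^n$. $D_i\textbf{F}(x)=\lim_{h\to0}\frac1h\odot(\textbf{F}(x+he_i)\ominus_{gH}\textbf{F}(x))$, $\nabla\textbf{F}(x)=(D_1\textbf{F}(x),\dots,D_n\textbf{F}(x))^T$. Linear IVF: $\textbf{L}(x)=\bigoplus_i x_i\odot\textbf{L}(e_i)$.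 $\textbf{F}$ is $gH$-differentiable at $\bar{x}$ if there exist a linear IVF $\textbf{L}_{\bar{x}}$, an IVF $\textbf{E}(\textbf{F}(\bar{x});d)$ and $\delta>0$ with $(\textbf{F}(\bar{x}+d)\ominus_{gH}\textbf{F}(\bar{x}))\ominus_{gH}\textbf{L}_{\bar{x}}(d)=\lVert d\rVert\odot\textbf{E}(\textbf{F}(\bar{x});d)$ for $\lVert d\rVert<\delta$ and $\textbf{E}\to\textbf{0}$ as $\lVert d\rVert\to0$. $\textbf{F}$ has $gH$-Lipschitz gradient on $\mathcal{X}$ if there is $M>0$ with $\lVert\nabla\textbf{F}(x)\ominus_{gH}\nabla\textbf{F}(y)\rVert_{I(\mathbb{R})^n}\le M\lVert x-y\rVert$ for all $x,y\in\mathcal{X}$. $\mathcal{W}(\textbf{A}_1,\dots,\textbf{A}_n)=(w\underline{a}_1+w'\overline{a}_1,\dots,w\underline{a}_n+w'\overline{a}_n)^T$. *)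

From HB Require Import structures.
From mathcomp Require Import all_boot all_order all_algebra.
From mathcomp Require Import reals.
Set Implicit Arguments. Unset Strict Implicit. Unset Printing Implicit Defensive.
Import Order.TTheory GRing.Theory Num.Theory.
Local Open Scope ring_scope.

Section IntervalArith.
Variable R : realType.

Record ivl := Ivl { ilo : R; ihi : R; ilohi : ilo <= ihi }.

Lemma iadd_proof (A B : ivl) : ilo A + ilo B <= ihi A + ihi B.
Proof. by apply: lerD; apply: ilohi. Qed.
Definition iadd (A B : ivl) : ivl := Ivl (iadd_proof A B).

Lemma izero_proof : (0 : R) <= 0. Proof. by []. Qed.
Definition izero : ivl := Ivl izero_proof.

Lemma iscale_proof (l : R) (A : ivl) :
  (if 0 <= l then l * ilo A else l * ihi A) <=
  (if 0 <= l then l * ihi A else l * ilo A).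
Proof.
case: ifP => hl; first by apply: ler_wpM2l => //; apply: ilohi.
apply: ler_wnM2l; last by apply: ilohi.
by rewrite leNgt in hl; move/negbFE: hl => /ltW.
Qed.
Definition iscale (l : R) (A : ivl) : ivl := Ivl (iscale_proof l A).

Lemma gHsub_proof (A B : ivl) :
  Num.min (ilo A - ilo B) (ihi A - ihi B) <= Num.max (ilo A - ilo B) (ihi A - ihi B).
Proof. by rewrite ge_min !le_max !lexx. Qed.
Definition gHsub (A B : ivl) : ivl := Ivl (gHsub_proof A B).

Definition inorm (A : ivl) : R := Num.max `|ilo A| `|ihi A|.

Variable n : nat.
Notation vec := 'rV[R]_n.

Definition enorm (x : vec) : R := Num.sqrt (\sum_(i < n) x ord0 i ^+ 2).

Definition evec (i : 'I_n) : vec := delta_mx ord0 i.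

(* Linear IVF L(x) = (+)_i x_i (.) L(e_i), determined by Le i = L(e_i) *)
Definition linIVF (Le : 'I_n -> ivl) (d : vec) : ivl :=
  \big[iadd/izero]_(i < n) iscale (d ord0 i) (Le i).

Definition is_gH_partial (F : vec -> ivl) (x : vec) (i : 'I_n)
  (D : ivl) : Prop :=
  forall eps : R, 0 < eps -> exists2 del : R, 0 < del &
    forall h : R, h != 0 -> `|h| < del ->
      inorm (gHsub (iscale h^-1 (gHsub (F (x + h *: evec i)) (F x))) D) < eps.

Definition is_gH_gradient (F : vec -> ivl) (x : vec)
  (g : 'I_n -> ivl) : Prop :=
  forall i, is_gH_partial F x i (g i).

Definition gH_differentiable (F : vec -> ivl) (xbar : vec) : Prop :=
  exists Le : 'I_n -> ivl, exists E : vec -> ivl,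
  exists2 del : R, 0 < del &
    (forall d : vec, enorm d < del ->
       gHsub (gHsub (F (xbar + d)) (F xbar)) (linIVF Le d) = iscale (enorm d) (E d))
    /\ (forall eps : R, 0 < eps -> exists2 eta : R, 0 < eta &
          forall d : vec, 0 < enorm d -> enorm d < eta -> inorm (E d) < eps).

Definition inormn (g : 'I_n -> ivl) : R := \sum_(i < n) inorm (g i).

Definition gHsubn (g h : 'I_n -> ivl) : 'I_n -> ivl :=
  fun i => gHsub (g i) (h i).

Definition gH_Lipschitz_gradient (X : vec -> Prop) (G : vec -> 'I_n -> ivl) : Prop :=
  exists2 M : R, 0 < M &
    forall x y, X x -> X y -> inormn (gHsubn (G x) (G y)) <= M * enorm (x - y).

Definition Wmap (w w' : R) (g : 'I_n -> ivl) : vec :=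
  \row_(i < n) (w * ilo (g i) + w' * ihi (g i)).

End IntervalArith.

From HB Require Import structures.
From mathcomp Require Import all_boot all_order all_algebra.
From mathcomp Require Import reals.
From mathcomp Require Import ring.
Set Implicit Arguments. Unset Strict Implicit. Unset Printing Implicit Defensive.
Import Order.TTheory GRing.Theory Num.Theory.
Local Open Scope ring_scope.

(* The weighted endpoint map W is 1-Lipschitz from (I(R)^n, ||_ (-)_gH _||)
   to the Euclidean R^n: the i-th coordinate of W(A) - W(B) is a convex
   combination of the endpoint differences of A_i and B_i, which are bounded
   by ||A_i (-)_gH B_i||, and the Euclidean norm is bounded by the l1 norm.
   Hence L := M works. *)

Lemma sum_sqr_le_sqr_sum (R : numDomainType) (I : Type) (r : seq I)
    (f : I -> R) :
  (forall i, 0 <= f i) -> \sum_(i <- r) f i ^+ 2 <= (\sum_(i <- r) f i) ^+ 2.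
Proof.
move=> f_ge0; elim: r => [|a r IHr]; first by rewrite !big_nil expr0n.
rewrite !big_cons sqrrD -addrA lerD2l.
have sum_ge0 : 0 <= \sum_(i <- r) f i by apply: sumr_ge0.
apply: le_trans IHr _; rewrite lerDr.
by rewrite mulrn_wge0 ?mulr_ge0.
Qed.

Lemma enorm_le_sum_norm (R : realType) (n : nat) (v : 'rV[R]_n) :
  enorm v <= \sum_(i < n) `|v ord0 i|.
Proof.
rewrite /enorm -[X in _ <= X]ger0_norm ?sumr_ge0 // -sqrtr_sqr.
apply: ler_wsqrtr; under eq_bigr do rewrite -real_normK ?num_real //.
exact: sum_sqr_le_sqr_sum.
Qed.

Lemma inorm_gHsub (R : realType) (A B : ivl R) :
  inorm (gHsub A B) = Num.max `|ilo A - ilo B| `|ihi A - ihi B|.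
Proof.
rewrite /inorm /=.
by case: (leP (ilo A - ilo B) (ihi A - ihi B)) => _ //; rewrite maxC.
Qed.

Lemma norm_convex_comb_le_max (R : realDomainType) (w w' p q : R) :
  0 <= w -> 0 <= w' -> w + w' = 1 -> `|w * p + w' * q| <= Num.max `|p| `|q|.
Proof.
move=> w_ge0 w'_ge0 ww'1.
apply: le_trans (ler_normD _ _) _.
rewrite !normrM (ger0_norm w_ge0) (ger0_norm w'_ge0).
rewrite -[X in _ <= X]mul1r -ww'1 mulrDl.
by apply: lerD; apply: ler_wpM2l; rewrite // le_max lexx ?orbT.
Qed.

Lemma enorm_Wmap_sub_le (R : realType) (n : nat) (w w' : R)
    (g h : 'I_n -> ivl R) :
  0 <= w -> 0 <= w' -> w + w' = 1 ->
  enorm (Wmap w w' g - Wmap w w' h) <= inormn (gHsubn g h).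
Proof.
move=> w_ge0 w'_ge0 ww'1.
apply: le_trans (enorm_le_sum_norm _) _; apply: ler_sum => i _.
rewrite !mxE /gHsubn inorm_gHsub.
have -> : w * ilo (g i) + w' * ihi (g i) - (w * ilo (h i) + w' * ihi (h i))
        = w * (ilo (g i) - ilo (h i)) + w' * (ihi (g i) - ihi (h i)) by ring.
exact: norm_convex_comb_le_max.
Qed.

Theorem lemma5p5 (R : realType) (n : nat) (w w' : R)
  (hw0 : 0 <= w) (hw1 : w <= 1) (hw'0 : 0 <= w') (hw'1 : w' <= 1)
  (hww : w + w' = 1)
  (X : 'rV[R]_n -> Prop) (hX : exists x, X x)
  (F : 'rV[R]_n -> ivl R)
  (hF : forall x, X x -> gH_differentiable F x)
  (G : 'rV[R]_n -> 'I_n -> ivl R)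
  (hG : forall x, X x -> is_gH_gradient F x (G x))
  (hLip : gH_Lipschitz_gradient X G) :
  exists2 L : R, 0 < L &
    forall x y, X x -> X y ->
      enorm (Wmap w w' (G x) - Wmap w w' (G y)) <= L * enorm (x - y).
Proof.
case: hLip => M M_gt0 G_Lip; exists M => // x y Xx Xy.
exact: le_trans (enorm_Wmap_sub_le (G x) (G y) hw0 hw'0 hww) (G_Lip x y Xx Xy).
Qed.
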